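(* Let $M\ge1$, $\alpha\in(0,1)$, $R_{th}>0$ and $\varepsilon=2^{2R_{th}/(1-\alpha)}-1$. For each $m\in\{1,\dots,M\}$ and each link $j\in\{SR_m,R_mD\}$ let IQI parameters $\xi_{t_j},\xi_{r_j}>0$, $\phi_{t_j},\phi_{r_j}\in\mathbb{R}$ be given, with $\mu_{t_j}=\tfrac12(1+\xi_{t_j}e^{i\phi_{t_j}})$, $v_{t_j}=\tfrac12(1-\xi_{t_j}e^{-i\phi_{t_j}})$, $\mu_{r_j}=\tfrac12(1+\xi_{r_j}e^{-i\phi_{r_j}})$, $v_{r_j}=\tfrac12(1-\xi_{r_j}e^{i\phi_{r_j}})$, $p_j=|\mu_{t_j}\mu_{r_j}+v_{t_j}^*v_{r_j}|^2$, $q_j=|\mu_{r_j}v_{t_j}+\mu_{t_j}^*v_{r_j}|^2$, and assume $p_j-\varepsilon q_j>0$. Let the random variables $X_j$, $j\in\{SR_m,R_mD: 1\le m\le M\}$, be mutually independent with $X_j$ exponential of rate $\lambda_j>0$, and let all estimation-error variances equal $t>0$: $\sigma^2_{e_j}=t$. Define $$C^\infty_j=\frac{1-\alpha}{2}\log_2\!\Big(1+\frac{X_jp_j}{\sigma^2_{e_j}p_j+X_jq_j+\sigma^2_{e_j}q_j}\Big).$$ Then $$\Pr\Big\{\max_{1\le m\le M}\min(C^\infty_{SR_m},C^\infty_{R_mD})<R_{th}\Big\}=\prod_{m=1}^M\Big(1-e^{-\lambda_{SR_m}H_{1,m}-\lambda_{R_mD}H_{2,m}}\Big),$$ where $H_{1,m}=\dfrac{\varepsilon\sigma^2_{e_{SR_m}}(p_{SR_m}+q_{SR_m})}{p_{SR_m}-\varepsilon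 q_{SR_m}}$ and $H_{2,m}=\dfrac{\varepsilon\sigma^2_{e_{R_mD}}(p_{R_mD}+q_{R_mD})}{p_{R_mD}-\varepsilon q_{R_mD}}$.
   Context: Decode-and-forward relaying with $M$ relays and optimal relay selection: the relay maximizing the end-to-end capacity $\min(C_{SR_m},C_{R_mD})$ is selected. $X_j=|\hat h_j|^2$ are estimated Rayleigh channel gains, $\sigma^2_{e_j}$ channel-estimation-error variances, $p_j,q_j$ the I/Q-imbalance gain coefficients. The left-hand side is the asymptotic (high-SNR) outage probability; $z^*$ is complex conjugate, $i$ the imaginary unit. *)

From HB Require Import structures.
From mathcomp Require Import all_boot all_order all_algebra.
From mathcomp Require Import all_classical all_reals all_analysis.
From mathcomp Require Import complex.
Set Implicit Arguments. Unset Strict Implicit. Unset Printing Implicit Defensive.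
Import Order.TTheory GRing.Theory Num.Theory.
Local Open Scope classical_set_scope.
Local Open Scope ring_scope.

Definition link := bool.
Definition SR : link := false.
Definition RD : link := true.

Definition log2 {R : realType} (x : R) : R := ln x / ln 2.

Definition expi {R : realType} (phi : R) : R[i] := (cos phi +i* sin phi)%C.

Definition mu_t {R : realType} (xi phi : R) : R[i] :=
  (((2:R)^-1)%:C * (1 + xi%:C * expi phi))%C.
Definition v_t {R : realType} (xi phi : R) : R[i] :=
  (((2:R)^-1)%:C * (1 - xi%:C * expi (- phi)))%C.
Definition mu_r {R : realType} (xi phi : R) : R[i] :=
  (((2:R)^-1)%:C * (1 + xi%:C * expi (- phi)))%C.
Definition v_r {R : realType} (xi phi : R) : R[i] :=
  (((2:R)^-1)%:C * (1 - xi%:C * expi phi))%C.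

Definition p_iqi {R : realType} (xit phit xir phir : R) : R :=
  ComplexField.Normc.normc (mu_t xit phit * mu_r xir phir + conjc (v_t xit phit) * v_r xir phir) ^+ 2.
Definition q_iqi {R : realType} (xit phit xir phir : R) : R :=
  ComplexField.Normc.normc (mu_r xir phir * v_t xit phit + conjc (mu_t xit phit) * v_r xir phir) ^+ 2.

Definition Cinf {R : realType} (alpha X p q s2 : R) : R :=
  (1 - alpha) / 2 * log2 (1 + X * p / (s2 * p + X * q + s2 * q)).

Definition mutually_independent {R : realType} d (T : measurableType d)
    (P : probability T R) (I : finType) (X : I -> {RV P >-> R}) : Prop :=
  forall (J : {set I}) (B : I -> set R), (forall i, measurable (B i)) ->
    P [set w | forall i, i \in J -> B i (X i w)] =
    (\prod_(i in J) P [set w | B i (X i w)])%E.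

From HB Require Import structures.
From mathcomp Require Import all_boot all_order all_algebra.
From mathcomp Require Import all_classical all_reals all_analysis.
From mathcomp Require Import complex.
From mathcomp Require Import ring lra measurable_realfun.
Import Order.TTheory GRing.Theory Num.Theory.
Local Open Scope classical_set_scope.
Local Open Scope ring_scope.

(* A link is in outage, C < R_th, exactly when its SNR falls below
   eps = 2^(2 R_th / (1 - alpha)) - 1; for a nonnegative channel gain x this
   means x < H = eps t (p + q) / (p - eps q), an event of probability
   1 - exp (- lam H) under the exponential law.  The system is in outage when
   every relay m has a link in outage, i.e. on the intersection over m of
   G_SR \/ G_RD.  Writing each union as the disjoint union of G_SR and
   ~G_SR /\ G_RD turns this event into a disjoint union of rectangles indexed
   by f : 'I_M -> bool; by independence the probability of each rectangle is a
   product, and distributing the sum over f back into a product gives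
   prod_m (1 - exp (- lam_SR H_SR) exp (- lam_RD H_RD)). *)

Definition snr_threshold {R : realType} (alpha Rth : R) : R :=
  2 `^ (2 * Rth / (1 - alpha)) - 1.

Section capacity.
Context {R : realType}.
Implicit Types alpha c x p q t y : R.

Lemma log2_lt_powR y c : 0 < c -> (log2 y < c) = (y < 2 `^ c).
Proof.
move=> c0; have ln2_gt0 : 0 < ln (2 : R) by rewrite ln_gt0 // ltr1n.
rewrite /log2 ltr_pdivrMr //; have [y0|y0] := ltP 0 y.
  by rewrite -ln_powR ltr_ln // posrE powR_gt0.
rewrite (le_lt_trans y0 (powR_gt0 _ _)) //.
by rewrite (le_lt_trans (ln_le0 _)) ?mulr_gt0 // (le_trans y0).
Qed.

Lemma snr_threshold_gt0 alpha Rth : 0 < alpha < 1 -> 0 < Rth ->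
  0 < snr_threshold alpha Rth.
Proof.
move=> /andP[a0 a1] Rth0; have c0 : 0 < 2 * Rth / (1 - alpha).
  by rewrite divr_gt0 ?mulr_gt0 ?subr_gt0.
by rewrite subr_gt0 -log2_lt_powR // /log2 ln1 mul0r.
Qed.

Lemma Cinf_lt alpha x p q t c : 0 < alpha < 1 -> 0 < c ->
  (Cinf alpha x p q t < c) =
  (x * p / (t * p + x * q + t * q) < snr_threshold alpha c).
Proof.
move=> /andP[a0 a1] c0; have k0 : 0 < (1 - alpha) / 2 by rewrite divr_gt0 ?subr_gt0.
rewrite /Cinf -ltr_pdivlMl // invf_div log2_lt_powR; last first.
  by rewrite mulr_gt0 ?divr_gt0 ?subr_gt0.
by rewrite [2 / _ * c]mulrAC /snr_threshold ltrBrDr [1 + _]addrC.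
Qed.
End capacity.

Section outage_set.
Context {R : realType} (eps t p q : R).

Definition outage_threshold := eps * t * (p + q) / (p - eps * q).

Definition outage_set : set R :=
  [set x | x < outage_threshold /\ 0 <= t * p + x * q + t * q].

Lemma outage_threshold_gt0 : 0 < t -> 0 <= q -> 0 < eps -> 0 < p - eps * q ->
  0 < outage_threshold.
Proof. by move=> t0 q0 e0 pq; rewrite divr_gt0 // !mulr_gt0 //; nra. Qed.

(* For x < 0 the denominator may be 0, where x / 0 = 0 makes the left-hand
   side true, or negative, where it is false; the second conjunct of
   outage_set separates the two cases. *)
Lemma snr_lt_outage_set x : 0 < t -> 0 <= q -> 0 < eps -> 0 < p - eps * q ->
  (x * p / (t * p + x * q + t * q) < eps) <-> outage_set x.
Proof.
move=> t0 q0 e0 pq; have p0 : 0 < p by nra.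
have tpq : 0 < eps * t * (p + q) by rewrite !mulr_gt0 //; nra.
rewrite /outage_set /outage_threshold /= ltr_pdivlMr //.
set D := t * p + x * q + t * q.
have x_lt0 : D <= 0 -> x < 0.
  by rewrite /D => D_le0; rewrite ltNge; apply/negP => x_ge0; nra.
have [D_lt0|D_gt0|D0] := ltgtP D 0.
- have : x * (p - eps * q) < 0 by rewrite pmulr_llt0 // x_lt0 // ltW.
  by rewrite ltr_ndivrMr //; split => [|[]//]; rewrite /D; nra.
- by rewrite ltr_pdivrMr //; split => [|[]]; rewrite /D; nra.
- rewrite D0 invr0 mulr0; split => // _; split => //.
  have /x_lt0 : D <= 0 by rewrite D0.
  by rewrite /D in D0; nra.
Qed.

Lemma measurable_outage_set : 0 < t -> 0 <= q -> 0 < eps -> 0 < p - eps * q ->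
  measurable outage_set.
Proof.
move=> t0 q0 e0 pq; have tp : 0 < t * p by rewrite mulr_gt0 //; nra.
have tq : 0 <= t * q by rewrite mulr_ge0 // ltW.
have [q0E|q_neq0] := eqVneq q 0.
  rewrite (_ : outage_set = `]-oo, outage_threshold[%classic).
    exact: measurable_itv.
  apply/seteqP; split => x; rewrite /outage_set /= in_itv /= q0E !mulr0 !addr0.
    by case.
  by move=> ?; split => //; lra.
have q_gt0 : 0 < q by rewrite lt_neqAle eq_sym q_neq0.
rewrite (_ : outage_set = `[- (t * p + t * q) / q, outage_threshold[%classic).
  exact: measurable_itv.
apply/seteqP; split => x; rewrite /outage_set /= in_itv /= ler_pdivrMr //.
  by case=> -> ?; rewrite andbT; lra.
by case/andP => ? ->; split => //; lra.
Qed.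
End outage_set.

Lemma Cinf_lt_outage_set (R : realType) (alpha Rth x p q t : R) :
  0 < alpha < 1 -> 0 < Rth -> 0 < t -> 0 <= q ->
  0 < p - snr_threshold alpha Rth * q ->
  (Cinf alpha x p q t < Rth) <-> outage_set (snr_threshold alpha Rth) t p q x.
Proof.
move=> a01 Rth0 t0 q0 pq; rewrite Cinf_lt //.
by apply: snr_lt_outage_set => //; exact: snr_threshold_gt0.
Qed.

Lemma exponential_prob_lt (R : realType) (lam c : R) (G : set R) :
  0 < lam -> 0 < c -> (forall x, 0 <= x -> G x <-> x < c) ->
  exponential_prob lam G = (1 - (expR (- lam * c))%:E)%E.
Proof.
move=> lam0 c0 Gc; rewrite -exponential_prob_itv0c // /exponential_prob.
rewrite -integral_itv_bndo_bndc; last first.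
  by apply/measurable_EFinP/measurable_funTS; exact: measurable_exponential_pdf.
rewrite integral_mkcond [RHS]integral_mkcond; apply: eq_integral => x _.
rewrite !patchE; have [x_lt0|x_ge0] := ltP x 0.
  by rewrite lt0_exponential_pdf //; case: ifP; case: ifP.
congr (if _ then _ else _); apply/idP/idP; rewrite !inE /= in_itv /= x_ge0 /=.
  by have [] := Gc x x_ge0.
by have [] := Gc x x_ge0.
Qed.

Lemma exponential_prob_outage_set (R : realType) (lam eps t p q : R) :
  0 < lam -> 0 < t -> 0 <= q -> 0 < eps -> 0 < p - eps * q ->
  exponential_prob lam (outage_set eps t p q) =
  (1 - (expR (- lam * outage_threshold eps t p q))%:E)%E.
Proof.
move=> lam0 t0 q0 e0 pq; apply: exponential_prob_lt => // [|x x0].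
  exact: outage_threshold_gt0.
have p0 : 0 < p by nra.
by rewrite /outage_set /=; split => [[]//|xc]; split => //; nra.
Qed.

Section independent_pairs.
Context {R : realType} {d} {T : measurableType d} {P : probability T R}.
Context {I : finType} {Y : I * bool -> {RV P >-> R}}.
Hypothesis indepY : mutually_independent Y.
Context {A : I * bool -> set R} {a : I * bool -> R}.
Hypothesis mA : forall k, measurable (A k).
Hypothesis PA : forall k, P [set w | A k (Y k w)] = (a k)%:E.

Definition pair_cell (f : {ffun I -> bool}) (k : I * bool) : set R :=
  if k.2 then (if f k.1 then A k else setT)
  else (if f k.1 then ~` A k else A k).

Definition pair_cell_event f := [set w | forall k, pair_cell f k (Y k w)].

Lemma measurable_pair_cell f k : measurable (pair_cell f k).
Proof. by rewrite /pair_cell; case: k.2; case: (f k.1) => //; apply: measurableC. Qed.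

Lemma measurable_pair_cell_event f : measurable (pair_cell_event f).
Proof.
rewrite (_ : pair_cell_event f = \bigcap_(k in setT) (Y k @^-1` pair_cell f k)).
  apply: fin_bigcap_measurable => [|k _]; first exact: finite_finset.
  by apply: measurable_funPTI; exact: measurable_pair_cell.
by apply/seteqP; split => w /= fw k; [move=> _|]; apply: fw.
Qed.

Lemma pair_union_eventE :
  [set w | forall i, A (i, false) (Y (i, false) w) \/ A (i, true) (Y (i, true) w)] =
  \bigcup_(f in setT) pair_cell_event f.
Proof.
apply/seteqP; split => w /=.
  move=> AY; exists [ffun i => ~~ `[< A (i, false) (Y (i, false) w) >]] => //.
  case=> i b; rewrite /pair_cell ffunE /=.
  by case: asboolP => /= Ai; case: b => //; case: (AY i).
move=> [f _ fw] i; have := fw (i, false); have := fw (i, true).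
by rewrite /pair_cell /=; case: (f i) => /= ? ?; [right|left].
Qed.

Lemma trivIset_pair_cell_event : trivIset setT pair_cell_event.
Proof.
move=> f g _ _ [w [/= fw gw]]; apply/ffunP => i.
have := fw (i, false); have := gw (i, false).
by rewrite /pair_cell /=; case: (f i); case: (g i).
Qed.

Lemma probability_pair_cell f k :
  P [set w | pair_cell f k (Y k w)] =
  (if k.2 then (if f k.1 then a k else 1) else (if f k.1 then 1 - a k else a k))%:E.
Proof.
rewrite /pair_cell; case: k.2; case: (f k.1) => //; first exact: probability_setT.
rewrite (_ : [set w | _] = ~` [set w | A k (Y k w)]) //.
by rewrite probability_setC ?PA //; exact: measurable_funPTI.
Qed.

Lemma probability_pair_cell_event f :
  P (pair_cell_event f) =
  (\prod_i (if f i then (1 - a (i, false)) * a (i, true) else a (i, false)))%:E.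
Proof.
rewrite /pair_cell_event (_ : [set w | _] =
    [set w | forall k, k \in [set: I * bool]%SET -> pair_cell f k (Y k w)]); last first.
  apply/seteqP; split => w /= fw k; first by move=> _; apply: fw.
  by apply: fw; rewrite finset.in_setT.
rewrite indepY; last exact: measurable_pair_cell.
rewrite (eq_bigr _ (fun k _ => probability_pair_cell f k)) prodEFin; congr EFin.
rewrite (eq_bigl xpredT) => [|k]; last by rewrite finset.in_setT.
pose F i (b : bool) := if b then (if f i then a (i, b) else 1)
  else (if f i then 1 - a (i, b) else a (i, b)).
rewrite (eq_bigr (fun k => F k.1 k.2)); last by case.
rewrite -pair_bigA; apply: eq_bigr => i _; rewrite big_bool /F /=.
by case: (f i); rewrite ?mul1r ?mulr1 // mulrC.
Qed.

Lemma probability_pair_union :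
  P [set w | forall i, A (i, false) (Y (i, false) w) \/ A (i, true) (Y (i, true) w)] =
  (\prod_i (a (i, false) + (1 - a (i, false)) * a (i, true)))%:E.
Proof.
rewrite pair_union_eventE measure_fin_bigcup; [|exact: finite_finset|
  exact: trivIset_pair_cell_event|by move=> f _; exact: measurable_pair_cell_event].
rewrite (fsbigE (enum {ffun I -> bool})) ?enum_uniq // => [|f _]; last first.
  by rewrite mem_enum.
rewrite (eq_bigl xpredT) => [|f]; last exact/mem_set.
rewrite big_enum (eq_bigr _ (fun f _ => probability_pair_cell_event f)) sumEFin.
congr EFin; rewrite (eq_bigr (fun i => \sum_(b : bool)
  if b then (1 - a (i, false)) * a (i, true) else a (i, false))) => [|i _].
  by rewrite bigA_distr_bigA.
by rewrite big_bool addrC.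
Qed.
End independent_pairs.

Theorem corollary5 (R : realType) (d : measure_display) (T : measurableType d)
  (P : probability T R) (M : nat) (alpha Rth t : R)
  (xit xir phit phir lam : 'I_M -> link -> R)
  (X : 'I_M -> link -> {RV P >-> R}) :
  (0 < M)%N -> 0 < alpha < 1 -> 0 < Rth -> 0 < t ->
  let eps := 2 `^ (2 * Rth / (1 - alpha)) - 1 in
  let p m j := p_iqi (xit m j) (phit m j) (xir m j) (phir m j) in
  let q m j := q_iqi (xit m j) (phit m j) (xir m j) (phir m j) in
  (forall m j, 0 < xit m j) -> (forall m j, 0 < xir m j) ->
  (forall m j, 0 < p m j - eps * q m j) ->
  (forall m j, 0 < lam m j) ->
  mutually_independent (fun mj : 'I_M * link => X mj.1 mj.2) ->
  (forall m j (A : set R), measurable A ->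
     distribution P (X m j) A = exponential_prob (lam m j) A) ->
  let C m j w := Cinf alpha (X m j w) (p m j) (q m j) t in
  let H m j := eps * t * (p m j + q m j) / (p m j - eps * q m j) in
  P [set w | (\big[Order.max/-oo]_(m < M) (Num.min (C m SR w) (C m RD w))%:E
              < Rth%:E)%E] =
  (\prod_(m < M) (1 - expR (- lam m SR * H m SR - lam m RD * H m RD)))%:E.
Proof.
move=> _ a01 Rth0 t0 eps p q _ _ pq lam0 indepX distrX C H.
have eps_gt0 : 0 < eps by exact: snr_threshold_gt0.
have q_ge0 m j : 0 <= q m j by exact: sqr_ge0.
pose A (k : 'I_M * link) := outage_set eps t (p k.1 k.2) (q k.1 k.2).
have mA k : measurable (A k) by apply: measurable_outage_set; rewrite ?q_ge0 ?pq.
have PA k : P [set w | A k (X k.1 k.2 w)] =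
    (1 - expR (- lam k.1 k.2 * H k.1 k.2))%:E.
  rewrite EFinB -exponential_prob_outage_set; rewrite ?lam0 ?q_ge0 ?pq //.
  by rewrite -distrX; last exact: mA.
have CA m j w : C m j w < Rth <-> A (m, j) (X m j w) by exact: Cinf_lt_outage_set.
rewrite (_ : [set w | _] =
    [set w | forall m, A (m, SR) (X m SR w) \/ A (m, RD) (X m RD w)]); last first.
  apply/seteqP; split => w /=.
    move/bigmax_ltP => [_ Cw] m; move: (Cw m isT); rewrite lte_fin gt_min.
    by case/orP => /CA; [left|right].
  move=> Aw; apply/bigmax_ltP; split => [|m _]; first exact: ltNyr.
  by rewrite lte_fin gt_min; case: (Aw m) => /CA ->; rewrite ?orbT.
rewrite (probability_pair_union indepX mA PA); congr EFin; apply: eq_bigr => m _ /=.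
by rewrite -mulNr expRD; ring.
Qed.
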